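(* Let $K$ be a convex body in $\mathbb{R}^d$, $G\subset\operatorname{int}(K)$ a convex body, $0<\alpha\le1$, and $G_+:=\{y\in\operatorname{int}(K):\inf_{g\in G}d_K(y,g)\le\alpha\}$. Then for every $x\in\partial G$ there exists $y\in\partial G_+$ with $d_K(x,y)=\alpha$. In particular, $\partial G\subseteq\{z:\inf_{w\in\partial G_+}d_K(z,w)\le\alpha\}$.
   Context: Hilbert distance: for distinct $x,y\in\operatorname{int}(K)$, with $y'$ (resp. $x'$) where the ray from $x$ through $y$ (resp. $y$ through $x$) meets $\partial K$, $d_K(x,y)=\frac12\ln\left(\frac{\|y-x'\|}{\|x-x'\|}\frac{\|x-y'\|}{\|y-y'\|}\right)$, $d_K(x,x)=0$. *)

From mathcomp Require Import all_boot all_order all_algebra.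
From mathcomp Require Import all_classical all_reals all_analysis.
Set Implicit Arguments. Unset Strict Implicit. Unset Printing Implicit Defensive.
Import Order.TTheory GRing.Theory Num.Theory.
Import numFieldNormedType.Exports.
Local Open Scope classical_set_scope.
Local Open Scope ring_scope.

Definition enorm (R : realType) (d : nat) (v : 'rV[R]_d) : R :=
  Num.sqrt (\sum_(i < d) (v ord0 i) ^+ 2).

Definition convex_set_rV (R : realType) (d : nat) (K : set 'rV[R]_d) : Prop :=
  forall x y (t : R), K x -> K y -> 0 <= t -> t <= 1 -> K (t *: x + (1 - t) *: y).

Definition convex_body (R : realType) (d : nat) (K : set 'rV[R]_d) : Prop :=
  [/\ compact K, convex_set_rV K & interior K !=set0].

Definition bd (R : realType) (d : nat) (A : set 'rV[R]_d) : set 'rV[R]_d :=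
  closure A `\` interior A.

Definition ray_exit (R : realType) (d : nat) (K : set 'rV[R]_d) (x y : 'rV[R]_d)
  : 'rV[R]_d :=
  xget 0 [set p | bd K p /\ exists t : R, 0 <= t /\ p = x + t *: (y - x)].

Definition hilbert_dist (R : realType) (d : nat) (K : set 'rV[R]_d) (x y : 'rV[R]_d)
  : R :=
  if x == y then 0 else
  let x' := ray_exit K y x in
  let y' := ray_exit K x y in
  ln ((enorm (y - x') / enorm (x - x')) * (enorm (x - y') / enorm (y - y'))) / 2.

Definition Gplus (R : realType) (d : nat) (K G : set 'rV[R]_d) (alpha : R)
  : set 'rV[R]_d :=
  [set y | interior K y /\ inf [set hilbert_dist K y g | g in G] <= alpha].

From mathcomp Require Import all_boot all_order all_algebra.
From mathcomp Require Import all_classical all_reals all_analysis.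
From mathcomp Require Import lra ring.
Import Order.TTheory GRing.Theory Num.Theory.
Import numFieldNormedType.Exports.
Local Open Scope classical_set_scope.
Local Open Scope ring_scope.
Set Implicit Arguments. Unset Strict Implicit. Unset Printing Implicit Defensive.

(* Let x be a boundary point of G and H a supporting hyperplane of G at x.
   Among pairs of affine functionals l1, l2 that are nonnegative on K, equal to 1
   at x, and satisfy l1 <= l2 on the side of H containing G, maximise the gap
   l1 - l2 in the direction of the normal of H.  At a maximiser the zero sets of
   l1 and l2 on K cannot be separated from x, so some chord [q, p] of K through x
   has l1(q) = 0 = l2(p).  Along this chord the Hilbert distance from x is
   explicit, and for every g in G the supporting functionals give
   d_K(y, g) >= 1/2 ln (l1(y) l2(g) / (l1(g) l2(y))) >= 1/2 ln (l1(y) / l2(y)),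
   which for y = x + t (p - x) is exactly d_K(x, y).  So x is a nearest point of
   G to every point of the chord beyond x: the point of the chord at distance
   alpha from x lies in G_+, while the points of the chord just beyond it do not. *)

Definition dot (R : realType) n (u v : 'rV[R]_n) : R := \sum_i u ord0 i * v ord0 i.

Section Dot.
Context {R : realType} {n : nat}.
Implicit Types u v w : 'rV[R]_n.

Lemma dotC u v : dot u v = dot v u.
Proof. by apply: eq_bigr => i _; rewrite mulrC. Qed.

Lemma dotDl u v w : dot (u + v) w = dot u w + dot v w.
Proof. by rewrite /dot -big_split; apply: eq_bigr => i _; rewrite !mxE mulrDl. Qed.

Lemma dotDr u v w : dot w (u + v) = dot w u + dot w v.
Proof. by rewrite dotC dotDl !(dotC w). Qed.

Lemma dotZl (a : R) u v : dot (a *: u) v = a * dot u v.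
Proof. by rewrite /dot mulr_sumr; apply: eq_bigr => i _; rewrite !mxE mulrA. Qed.

Lemma dotZr (a : R) u v : dot v (a *: u) = a * dot v u.
Proof. by rewrite dotC dotZl dotC. Qed.

Lemma dotNl u v : dot (- u) v = - dot u v.
Proof. by rewrite -scaleN1r dotZl mulN1r. Qed.

Lemma dotNr u v : dot v (- u) = - dot v u.
Proof. by rewrite dotC dotNl dotC. Qed.

Lemma dotBl u v w : dot (u - v) w = dot u w - dot v w.
Proof. by rewrite dotDl dotNl. Qed.

Lemma dotBr u v w : dot w (u - v) = dot w u - dot w v.
Proof. by rewrite dotDr dotNr. Qed.

Lemma dot0l v : dot 0 v = 0.
Proof. by rewrite /dot big1 // => i _; rewrite mxE mul0r. Qed.

Lemma dot0r v : dot v 0 = 0.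
Proof. by rewrite dotC dot0l. Qed.

Lemma dot_ge0 v : 0 <= dot v v.
Proof. by apply: sumr_ge0 => i _; rewrite -expr2 sqr_ge0. Qed.

Lemma dot_gt0 v : v != 0 -> 0 < dot v v.
Proof.
move=> v0; rewrite lt_def dot_ge0 andbT; apply: contra v0.
rewrite /dot psumr_eq0 => [/allP v0|i _]; last by rewrite -expr2 sqr_ge0.
apply/eqP/rowP => i; rewrite mxE.
have /v0 : i \in index_enum 'I_n by rewrite mem_index_enum.
by rewrite /= mulf_eq0 orbb => /eqP.
Qed.

Lemma dot_shift_sqr u v (t : R) :
  dot (u + t *: v) (u + t *: v) = dot u u + 2 * t * dot u v + t ^+ 2 * dot v v.
Proof. by rewrite !dotDl !dotDr !dotZl !dotZr (dotC v u); ring. Qed.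

Lemma enorm_dot v : enorm v = Num.sqrt (dot v v).
Proof. by []. Qed.

Lemma enormZ (a : R) v : enorm (a *: v) = `|a| * enorm v.
Proof.
rewrite !enorm_dot dotZl dotZr mulrA sqrtrM; last by rewrite -expr2 sqr_ge0.
by rewrite -expr2 sqrtr_sqr.
Qed.

Lemma enorm_gt0 v : v != 0 -> 0 < enorm v.
Proof. by move=> v0; rewrite enorm_dot sqrtr_gt0 dot_gt0. Qed.

Lemma normr_coord_le v i : `|v ord0 i| <= `|v|.
Proof.
rewrite [leRHS]/Num.Def.normr /= mx_normrE; apply/bigmax_geP; right => /=.
by exists (ord0, i).
Qed.

Lemma normr_dot_le u v : `|dot u v| <= n%:R * (`|u| * `|v|).
Proof.
apply: le_trans (ler_norm_sum _ _ _) _.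
rewrite -[n in n%:R]card_ord -sum1_card natr_sum mulr_suml.
apply: ler_sum => i _; rewrite mul1r normrM.
by apply: ler_pM => //; apply: normr_coord_le.
Qed.

Lemma dot_le_norm u v : dot u v <= n%:R * (`|u| * `|v|).
Proof. exact: le_trans (ler_norm _) (normr_dot_le _ _). Qed.

Lemma continuous_dot {T : topologicalType} (f g : T -> 'rV[R]_n) :
  continuous f -> continuous g -> continuous (fun t => dot (f t) (g t)).
Proof.
move=> cf cg; apply: (@continuous_big R^o _ +%R 0 xpredT add_continuous T (index_enum _)
  (fun i t => f t ord0 i * g t ord0 i)) => i _ t.
have coord (h : T -> 'rV[R]_n) : continuous h -> continuous (fun t => h t ord0 i).
  move=> ch s; apply: (@continuous_comp _ _ _ h (fun v : 'rV[R]_n => v ord0 i)).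
    exact: ch.
  exact: coord_continuous.
exact: continuousM (coord _ cf t) (coord _ cg t).
Qed.

Lemma continuous_subr x : continuous (fun z : 'rV[R]_n => z - x).
Proof.
by move=> z; apply: (@continuousB _ _ _ id (fun=> x)); [exact: cvg_id | exact: cst_continuous].
Qed.

End Dot.

Section Interior.
Context {R : realType} {n : nat}.
Implicit Types (K : set 'rV[R]_n) (a b x y v : 'rV[R]_n).

Lemma interiorP K x :
  interior K x <-> exists2 r : R, 0 < r & forall y, `|y - x| < r -> K y.
Proof.
rewrite /interior; split.
  move=> /nbhs_ballP [r /= r0 H]; exists r => // y yr; apply: H.
  by rewrite -ball_normE /= -normrN opprB.
move=> [r r0 H]; apply/nbhs_ballP; exists r => // y.
by rewrite -ball_normE /= => yr; apply: H; rewrite -normrN opprB.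
Qed.

Lemma compact_norm_le K : compact K -> exists M : R, forall x, K x -> `|x| <= M.
Proof.
move=> /compact_bounded [M [_ HM]]; exists (M + 1) => x Kx.
by apply: (HM (M + 1)); rewrite // ltrDl.
Qed.

Lemma compact_sub_norm_le K x : compact K ->
  exists2 D : R, 0 <= D & forall k, K k -> `|k - x| <= D.
Proof.
move=> /compact_norm_le [M HM]; exists (`|M| + `|x|) => [|k Kk]; first by rewrite addr_ge0.
by apply: le_trans (ler_normB _ _) _; rewrite lerD2r (le_trans (HM k Kk)) ?ler_norm.
Qed.

Lemma norm_le_bounded K (M : R) : (forall x, K x -> `|x| <= M) -> bounded_set K.
Proof.
move=> HM; exists M; split; first exact: num_real.
by move=> y My x Kx; apply: le_trans (HM x Kx) (ltW My).
Qed.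

Lemma compact_closed_rV K : compact K -> closed K.
Proof. by move=> cK; apply: compact_closed => //; exact: norm_hausdorff. Qed.

Lemma bd_closed K x : closed K -> bd K x <-> K x /\ ~ interior K x.
Proof. by move=> cK; rewrite /bd -(proj1 (closure_id K) cK). Qed.

Lemma small_scale v (r : R) : 0 < r -> exists2 e : R, 0 < e < 1 & `|e *: v| < r.
Proof.
move=> r0; have v0 := normr_ge0 v.
have rv : 0 < 2 * (r + `|v|) by rewrite mulr_gt0 // ltr_wpDr.
exists (r / (2 * (r + `|v|))).
  by rewrite divr_gt0 //= ltr_pdivrMr // mul1r; nra.
rewrite normrZ gtr0_norm ?divr_gt0 // mulrAC ltr_pdivrMr //; nra.
Qed.

Lemma interior_convex_comb K a b (t : R) : convex_set_rV K ->
  interior K a -> K b -> 0 < t -> t <= 1 -> interior K (t *: a + (1 - t) *: b).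
Proof.
move=> cK /interiorP [r r0 Hr] Kb t0 t1; apply/interiorP.
exists (t * r); first by rewrite mulr_gt0.
move=> y yr.
have -> : y = t *: (t^-1 *: (y - (1 - t) *: b)) + (1 - t) *: b.
  by rewrite scalerA mulfV ?gt_eqF // scale1r subrK.
apply: cK => //; last exact: ltW.
apply: Hr.
have -> : t^-1 *: (y - (1 - t) *: b) - a = t^-1 *: (y - (t *: a + (1 - t) *: b)).
  by apply/rowP => i; rewrite !mxE; field; rewrite gt_eqF.
by rewrite normrZ ger0_norm ?invr_ge0 ?ltW // ltr_pdivrMl.
Qed.

Lemma interior_segment K a b (s : R) : convex_set_rV K ->
  interior K a -> K b -> 0 <= s -> s < 1 -> interior K (a + s *: (b - a)).
Proof.
move=> cK ia Kb s0 s1.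
have -> : a + s *: (b - a) = (1 - s) *: a + (1 - (1 - s)) *: b.
  by apply/rowP => i; rewrite !mxE; ring.
by apply: interior_convex_comb; rewrite // ?subr_gt0 // lerBlDr lerDl.
Qed.

Lemma ray_bd_unique K a v (t1 t2 : R) : convex_set_rV K -> interior K a ->
  0 <= t1 -> 0 <= t2 -> K (a + t1 *: v) -> K (a + t2 *: v) ->
  ~ interior K (a + t1 *: v) -> ~ interior K (a + t2 *: v) -> t1 *: v = t2 *: v.
Proof.
move=> cK ia.
wlog le12 : t1 t2 / t1 <= t2.
  move=> W t10 t20 K1 K2 n1 n2; have [le12|/ltW le21] := leP t1 t2; first exact: W.
  exact/esym/W.
move=> t10 t20 K1 K2 n1 n2; have [->//|ne12] := eqVneq t1 t2.
have lt12 : t1 < t2 by rewrite lt_neqAle ne12.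
have t2p : 0 < t2 by apply: le_lt_trans lt12.
exfalso; apply: n1.
have -> : a + t1 *: v = a + (t1 / t2) *: ((a + t2 *: v) - a).
  by rewrite (addrC a (t2 *: v)) addrK scalerA mulfVK ?gt_eqF.
by apply: interior_segment; rewrite ?divr_ge0 // ltr_pdivrMr // mul1r.
Qed.

Lemma ray_exit_eq K a b (t : R) : compact K -> convex_set_rV K -> interior K a ->
  0 <= t -> K (a + t *: (b - a)) -> ~ interior K (a + t *: (b - a)) ->
  ray_exit K a b = a + t *: (b - a).
Proof.
move=> cpK cK ia t0 Kp np; have clK := compact_closed_rV cpK.
rewrite /ray_exit; apply: xget_unique.
  by split; [apply/bd_closed | exists t].
move=> q [/(bd_closed _ clK) [Kq nq] [s [s0 qE]]].
rewrite qE; congr (_ + _).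
by apply: (@ray_bd_unique K a (b - a) s t); rewrite -?qE.
Qed.

Lemma ray_leaves_interior K a b : compact K -> interior K a -> interior K b -> a != b ->
  exists2 t : R, 1 < t & K (a + t *: (b - a)) /\ ~ interior K (a + t *: (b - a)).
Proof.
move=> cpK ia ib ab; set v := b - a.
have v0 : 0 < `|v| by rewrite normr_gt0 subr_eq0 eq_sym.
have [M HM] := compact_norm_le cpK.
pose T := [set t : R | 0 <= t /\ K (a + t *: v)].
have T1 : T 1 by split => //; rewrite scale1r /v addrC subrK; exact: interior_subset.
have hsT : has_sup T.
  split; first by exists 1.
  exists ((M + `|a|) / `|v|) => t [t0 Kt].
  rewrite ler_pdivlMr //.
  have -> : t * `|v| = `|(a + t *: v) - a| by rewrite (addrC a) addrK normrZ ger0_norm.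
  by apply: le_trans (ler_normB _ _) _; rewrite lerD2r; apply: HM.
have ubT t : T t -> t <= sup T by move=> Tt; apply: sup_upper_bound.
have Ksup : K (a + sup T *: v).
  rewrite (proj1 (closure_id K) (compact_closed_rV cpK)) => B /nbhs_ballP [e /= e0 He].
  have [t Tt tlt] := sup_adherent (divr_gt0 e0 v0) hsT.
  exists (a + t *: v); split; first by case: Tt.
  apply: He; rewrite -ball_normE /= opprD addrACA subrr add0r -scalerBl normrZ.
  rewrite ger0_norm ?subr_ge0 ?ubT // -ltr_pdivlMr //; lra.
have nsup : ~ interior K (a + sup T *: v).
  move=> /interiorP [r r0 Hr]; have [e /andP [e0 _] er] := small_scale v r0.
  have /ubT : T (sup T + e).
    split; first by apply: addr_ge0; [exact: le_trans ler01 (ubT _ T1) | exact: ltW].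
    apply: Hr; suff -> : a + (sup T + e) *: v - (a + sup T *: v) = e *: v by [].
    by apply/rowP => i; rewrite !mxE; ring.
  by rewrite gerDl leNgt e0.
exists (sup T) => //; rewrite lt_neqAle ubT // andbT.
by apply: contraPneq nsup => <-; rewrite scale1r /v addrC subrK.
Qed.

End Interior.

Definition aff (R : realType) n (x a k : 'rV[R]_n) : R := 1 + dot a (k - x).

Definition nonneg_on (R : realType) n (K : set 'rV[R]_n) (f : 'rV[R]_n -> R) : Prop :=
  forall k, K k -> 0 <= f k.

Section HilbertDistance.
Context {R : realType} {n : nat}.
Implicit Types (K : set 'rV[R]_n) (a g k q u w x z : 'rV[R]_n).

Lemma aff_segment x a u w (t : R) :
  aff x a (u + t *: (w - u)) = aff x a u + t * (aff x a w - aff x a u).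
Proof. by rewrite /aff !dotBr dotDr dotZr dotBr; ring. Qed.

Lemma aff_eq0_not_interior K x a q :
  nonneg_on K (aff x a) -> aff x a q = 0 -> ~ interior K q.
Proof.
move=> Ha q0 /interiorP [r r0 Hr].
have [e /andP [e0 _] er] := small_scale (q - x) r0.
have /Ha : K (q + e *: (q - x)) by apply: Hr; rewrite (addrC q) addrK.
have -> : q + e *: (q - x) = q + (- e) *: (x - q).
  by rewrite scaleNr -scalerN opprB.
rewrite aff_segment q0 /aff subrr dot0r; lra.
Qed.

Lemma aff_gt0_interior K x a k :
  nonneg_on K (aff x a) -> interior K k -> 0 < aff x a k.
Proof.
move=> Ha ik; rewrite lt_def Ha ?andbT; last exact: interior_subset.
by apply/eqP => k0; exact: aff_eq0_not_interior Ha k0 ik.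
Qed.

Lemma hilbert_distC K x z : hilbert_dist K x z = hilbert_dist K z x.
Proof.
have [-> //|xz] := eqVneq x z.
have zx : (z == x) = false by apply/negbTE; rewrite eq_sym.
rewrite /hilbert_dist (negPf xz) zx.
exact: (congr1 (fun t => ln t / 2) (mulrC _ _)).
Qed.

Lemma hilbert_distxx K x : hilbert_dist K x x = 0.
Proof. by rewrite /hilbert_dist eqxx. Qed.

Lemma enormZ_ratio (s t : R) w : w != 0 -> enorm (s *: w) / enorm (t *: w) = `|s| / `|t|.
Proof. by move=> w0; rewrite !enormZ -mulf_div divff ?mulr1 // gt_eqF // enorm_gt0. Qed.

Lemma hilbert_dist_exits K z g (t1 t2 : R) : compact K -> convex_set_rV K ->
  interior K z -> interior K g -> z != g -> 1 < t1 -> 1 < t2 ->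
  K (g + t1 *: (z - g)) -> ~ interior K (g + t1 *: (z - g)) ->
  K (z + t2 *: (g - z)) -> ~ interior K (z + t2 *: (g - z)) ->
  hilbert_dist K z g = ln (t1 / (t1 - 1) * (t2 / (t2 - 1))) / 2.
Proof.
move=> cpK cK iz ig zg t11 t21 K1 n1 K2 n2.
have [t10 t20] : 0 < t1 /\ 0 < t2 by split; lra.
rewrite /hilbert_dist (negPf zg) /=.
rewrite (ray_exit_eq cpK cK ig (ltW t10) K1 n1) (ray_exit_eq cpK cK iz (ltW t20) K2 n2).
have E (u v : 'rV[R]_n) (s : R) : v - (v + s *: (u - v)) = (- s) *: (u - v).
  by rewrite opprD addNKr scaleNr.
have F (u v : 'rV[R]_n) (s : R) : u - (v + s *: (u - v)) = (1 - s) *: (u - v).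
  by rewrite scalerBl scale1r opprD addrA.
have gz : g != z by rewrite eq_sym.
rewrite E F (E g z) (F g z) !enormZ_ratio ?subr_eq0 //.
by rewrite !normrN (distrC 1) (distrC 1) !gtr0_norm ?subr_gt0.
Qed.

Lemma div_le_exit_ratio (A B t : R) :
  0 < B -> 1 < t -> 0 <= A + t * (B - A) -> A / B <= t / (t - 1).
Proof. by move=> B0 t1 H; rewrite ler_pdivrMr // mulrAC ler_pdivlMr ?subr_gt0 //; nra. Qed.

Lemma hilbert_dist_ge_aff K x a1 a2 z g : compact K -> convex_set_rV K ->
  nonneg_on K (aff x a1) -> nonneg_on K (aff x a2) -> interior K z -> interior K g ->
  ln (aff x a1 z * aff x a2 g / (aff x a1 g * aff x a2 z)) / 2 <= hilbert_dist K z g.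
Proof.
move=> cpK cK l1 l2 iz ig.
have p1z := aff_gt0_interior l1 iz; have p1g := aff_gt0_interior l1 ig.
have p2z := aff_gt0_interior l2 iz; have p2g := aff_gt0_interior l2 ig.
have [<-|zg] := eqVneq z g.
  by rewrite hilbert_distxx [_ * aff x a2 z]mulrC divff ?ln1 ?mul0r // mulf_neq0 ?gt_eqF.
have gz : g != z by rewrite eq_sym.
have [t1 t11 [K1 n1]] := ray_leaves_interior cpK ig iz gz.
have [t2 t21 [K2 n2]] := ray_leaves_interior cpK iz ig zg.
rewrite (hilbert_dist_exits cpK cK iz ig zg t11 t21 K1 n1 K2 n2).
have A0 : 0 < aff x a1 z * aff x a2 g / (aff x a1 g * aff x a2 z).
  by rewrite divr_gt0 ?mulr_gt0.
have T0 : 0 < t1 / (t1 - 1) * (t2 / (t2 - 1)).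
  by rewrite mulr_gt0 ?divr_gt0 ?subr_gt0 ?(lt_trans ltr01).
rewrite ler_pM2r // ler_ln ?posrE //.
rewrite -mulf_div [X in _ <= X]mulrC.
apply: ler_pM; rewrite ?divr_ge0 ?(ltW p1z) ?(ltW p2z) ?(ltW p1g) ?(ltW p2g) //.
  by apply: div_le_exit_ratio => //; rewrite -aff_segment; exact: l1.
by apply: div_le_exit_ratio => //; rewrite -aff_segment; exact: l2.
Qed.

End HilbertDistance.

Lemma le0_of_le_scaled (R : realFieldType) (a C : R) :
  0 <= C -> (forall t, 0 < t -> t <= 1 -> a <= t * C) -> a <= 0.
Proof.
move=> C0 H; rewrite leNgt; apply/negP => a0.
have Ca : 0 < C + a by rewrite ltr_wpDl.
have t1 : a / (C + a) <= 1 by rewrite ler_pdivrMr // mul1r lerDr.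
have := H _ (divr_gt0 a0 Ca) t1; rewrite mulrAC ler_pdivlMr //; nra.
Qed.

Definition support_gap (R : realType) n (G : set 'rV[R]_n) (x h : 'rV[R]_n) : R :=
  sup [set dot h (g - x) | g in G].

Section Separation.
Context {R : realType} {n : nat}.
Implicit Types (C G : set 'rV[R]_n) (c g h x z : 'rV[R]_n).

Lemma compact_convex_separation C x : compact C -> convex_set_rV C ->
  C !=set0 -> ~ C x -> exists2 v : 'rV[R]_n, v != 0 & forall z, C z -> dot v v <= dot v (z - x).
Proof.
move=> cC cvC C0 nCx.
have cx := @continuous_subr _ _ x.
have [c Cc cmin] := compact_EVT_min C0 cC (continuous_subspaceT (continuous_dot cx cx)).
rewrite inE in Cc.
exists (c - x); first by rewrite subr_eq0; apply: contraPneq nCx => <-.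
move=> z Cz.
have descent t : 0 < t -> t <= 1 -> - (2 * dot (c - x) (z - c)) <= t * dot (z - c) (z - c).
  move=> t0 t1; have := cmin (t *: z + (1 - t) *: c).
  rewrite inE => /(_ (cvC _ _ _ Cz Cc (ltW t0) t1)).
  have -> : t *: z + (1 - t) *: c - x = (c - x) + t *: (z - c).
    by apply/rowP => i; rewrite !mxE; ring.
  rewrite dot_shift_sqr => Hm.
  have : 0 <= t * (2 * dot (c - x) (z - c) + t * dot (z - c) (z - c)) by nra.
  rewrite pmulr_rge0 //; lra.
have := le0_of_le_scaled (dot_ge0 (z - c)) descent.
have -> : dot (c - x) (z - x) = dot (c - x) (c - x) + dot (c - x) (z - c).
  by rewrite -dotDr; congr dot; rewrite [RHS]addrC addrA subrK.
lra.
Qed.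

Lemma lipschitz_continuous_rV (f : 'rV[R]_n -> R) (L : R) : 0 <= L ->
  (forall u v, f u - f v <= L * `|u - v|) -> continuous f.
Proof.
move=> L0 H h B /nbhs_ballP [e /= e0 HB]; apply/nbhs_ballP.
exists (e / (L + 1)) => [|w]; first by rewrite /= divr_gt0 // ltr_wpDl.
rewrite -ball_normE /= => hw; apply: HB; rewrite -ball_normE /=.
have H1 := H h w; have := H w h; rewrite -normrN opprB => H2.
have : L * `|h - w| <= L * (e / (L + 1)) by rewrite ler_wpM2l // ltW.
have : L * (e / (L + 1)) < e by rewrite mulrA ltr_pdivrMr ?ltr_wpDl //; nra.
rewrite ltr_norml => *; apply/andP; split; lra.
Qed.

Section SupportGap.
Variables (G : set 'rV[R]_n) (x : 'rV[R]_n).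
Hypotheses (cpG : compact G) (Gx : G x).

Let gap_bound : exists2 L : R, 0 <= L & forall h g, G g -> dot h (g - x) <= `|h| * L.
Proof.
have [D D0 HD] := compact_sub_norm_le x cpG.
exists (n%:R * D) => [|h g Gg]; first by rewrite mulr_ge0.
by apply: le_trans (dot_le_norm _ _) _; rewrite mulrCA ler_wpM2l // ler_wpM2l // HD.
Qed.

Lemma support_gap_ge h g : G g -> dot h (g - x) <= support_gap G x h.
Proof.
have [L _ HL] := gap_bound; move=> Gg; apply: sup_upper_bound; last by exists g.
split; first by exists (dot h (g - x)), g.
by exists (`|h| * L) => _ [g' Gg' <-]; exact: HL.
Qed.

Lemma support_gap_continuous : continuous (support_gap G x).
Proof.
have [L L0 HL] := gap_bound; apply: (lipschitz_continuous_rV L0) => u v.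
rewrite lerBlDl; apply: ge_sup; first by exists (dot u (x - x)), x.
move=> _ [g Gg <-].
have -> : dot u (g - x) = dot v (g - x) + dot (u - v) (g - x) by rewrite dotBl; ring.
by apply: lerD; [exact: support_gap_ge | rewrite mulrC; exact: HL].
Qed.

End SupportGap.

Lemma approx_support G x c (t : R) : compact G -> convex_set_rV G ->
  interior G c -> G x -> ~ interior G x -> 0 < t ->
  exists2 h : 'rV[R]_n, `|h| = 1 & forall g, G g -> dot h (g - x) <= t * (n%:R * `|x - c|).
Proof.
move=> cpG cvG ic Gx nix t0.
set xt := x + t *: (x - c).
have nGxt : ~ G xt.
  move=> Gxt; apply: nix; have t1 : 0 < 1 + t by lra.
  have -> : x = (t / (1 + t)) *: c + (1 - t / (1 + t)) *: xt.
    by apply/rowP => i; rewrite /xt !mxE; field; rewrite gt_eqF.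
  by apply: interior_convex_comb; rewrite ?divr_gt0 // ler_pdivrMr // mul1r lerDr.
have [v v0 Hv] := compact_convex_separation cpG cvG (ex_intro _ x Gx) nGxt.
have nv : 0 < `|v| by rewrite normr_gt0.
set u := - `|v|^-1 *: v.
have u1 : `|u| = 1.
  by rewrite normrZ normrN normrV ?unitfE ?gt_eqF // normr_id mulVf ?gt_eqF.
exists u => // g Gg.
have -> : g - x = (g - xt) + t *: (x - c) by rewrite /xt opprD addrA subrK.
rewrite dotDr -[leRHS]add0r; apply: lerD.
  rewrite /u dotZl mulNr oppr_le0 mulr_ge0 ?invr_ge0 ?normr_ge0 //.
  exact: le_trans (dot_ge0 v) (Hv g Gg).
apply: le_trans (dot_le_norm _ _) _.
by rewrite u1 mul1r normrZ gtr0_norm // mulrCA lexx.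
Qed.

Lemma convex_body_support G x : convex_body G -> bd G x ->
  exists2 h : 'rV[R]_n, h != 0 & forall g, G g -> dot h (g - x) <= 0.
Proof.
move=> [cpG cvG [c ic]] /(bd_closed _ (compact_closed_rV cpG)) [Gx nix].
pose S := [set h : 'rV[R]_n | `|h| = 1].
have cS : compact S.
  apply: bounded_closed_compact; first by apply: (@norm_le_bounded _ _ _ 1) => h ->.
  apply: (@preimage_closed _ _ (fun h : 'rV[R]_n => `|h|) [set 1]); last exact: closed_eq.
  by move=> h _; exact: norm_continuous.
have [h1 h11 _] := approx_support cpG cvG ic Gx nix ltr01.
have [hs] := EVT_min_rV (ex_intro _ h1 h11) cS
  (continuous_subspaceT (support_gap_continuous cpG Gx)).
rewrite inE => hs1 hsmin.
exists hs; first by rewrite -normr_eq0 hs1 oner_eq0.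
move=> g Gg; apply: le_trans (support_gap_ge x cpG hs Gg) _.
apply: (le0_of_le_scaled (C := n%:R * `|x - c|)) => // t t0 _.
have [ht ht1 Ht] := approx_support cpG cvG ic Gx nix t0.
apply: le_trans (hsmin ht _) _; first by rewrite inE.
by apply: ge_sup; [exists (dot ht (x - x)), x | move=> _ [g' Gg' <-]; exact: Ht].
Qed.

End Separation.

Definition contact (R : realType) n (K : set 'rV[R]_n) (x a : 'rV[R]_n) : set 'rV[R]_n :=
  K `&` aff x a @^-1` [set 0].

Definition segment_join (R : realType) n (Z1 Z2 : set 'rV[R]_n) : set 'rV[R]_n :=
  (fun z : 'rV[R]_n * 'rV[R]_n * R => (1 - z.2) *: z.1.1 + z.2 *: z.1.2) @`
    (Z1 `*` Z2 `*` `[0, 1]%classic).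

Section Coordinates.
Context {R : realType}.

Lemma norm_le_coord m (v : 'rV[R]_m) (B : R) :
  0 <= B -> (forall i, `|v ord0 i| <= B) -> `|v| <= B.
Proof.
move=> B0 H; rewrite /Num.Def.normr /= mx_normrE; apply/bigmax_leP; split => // -[i j] _.
by rewrite /= (ord1 i); apply: H.
Qed.

Lemma norm_lsub_rsub_le m1 m2 (v : 'rV[R]_(m1 + m2)) (B : R) :
  0 <= B -> `|lsubmx v| <= B -> `|rsubmx v| <= B -> `|v| <= B.
Proof.
move=> B0 Hl Hr; apply: norm_le_coord => // i; case: (splitP i) => j ij.
  have -> : v ord0 i = lsubmx v ord0 j by rewrite mxE; congr (v _ _); exact: val_inj.
  exact: le_trans (normr_coord_le _ _) Hl.
have -> : v ord0 i = rsubmx v ord0 j by rewrite mxE; congr (v _ _); exact: val_inj.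
exact: le_trans (normr_coord_le _ _) Hr.
Qed.

Lemma dot_row_mx m1 m2 (v : 'rV[R]_(m1 + m2)) u1 u2 :
  dot v (row_mx u1 u2) = dot (lsubmx v) u1 + dot (rsubmx v) u2.
Proof.
rewrite /dot big_split_ord /=; congr (_ + _); apply: eq_bigr => i _.
  by rewrite row_mxEl mxE.
by rewrite row_mxEr mxE.
Qed.

Lemma dot_delta m (a : 'rV[R]_m) j : dot a (delta_mx 0 j) = a ord0 j.
Proof.
rewrite /dot (bigD1 j) //= big1 => [|i ij]; first by rewrite !mxE !eqxx mulr1 addr0.
by rewrite !mxE (negbTE ij) andbF mulr0.
Qed.

Lemma norm_delta_le1 m (j : 'I_m) : `|(delta_mx 0 j : 'rV[R]_m)| <= 1.
Proof. by apply: norm_le_coord => // i; rewrite !mxE; case: (_ && _); rewrite ?normr1 ?normr0. Qed.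

Lemma closed_forall_preimage {T U : topologicalType} {I : Type} (P : I -> Prop)
    (f : I -> T -> U) (D : I -> set U) :
  (forall i, continuous (f i)) -> (forall i, closed (D i)) ->
  closed [set v | forall i, P i -> D i (f i v)].
Proof.
move=> cf cD.
have -> : [set v | forall i, P i -> D i (f i v)] = \bigcap_(i in P) (f i @^-1` D i).
  by apply/seteqP; split => v.
by apply: closed_bigI => i _; apply: preimage_closed => [v _|]; [exact: cf | exact: cD].
Qed.

End Coordinates.

Section Contact.
Context {R : realType} {n : nat}.
Implicit Types (C K Z : set 'rV[R]_n) (a k q p u v w x : 'rV[R]_n).

Lemma aff_base x a : aff x a x = 1.
Proof. by rewrite /aff subrr dot0r addr0. Qed.

Lemma continuous_aff x a : continuous (aff x a).
Proof.
apply: (@lipschitz_continuous_rV _ _ _ (n%:R * `|a|)); first by rewrite mulr_ge0.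
move=> u v; rewrite /aff opprD addrACA subrr add0r -dotBr.
have -> : u - x - (v - x) = u - v by rewrite opprB addrA subrK.
by apply: le_trans (dot_le_norm _ _) _; rewrite mulrA.
Qed.

Lemma contact_base K x a : ~ contact K x a x.
Proof. by move=> [_ /=]; rewrite aff_base => /eqP; rewrite oner_eq0. Qed.

Lemma contact_compact K x a : compact K -> compact (contact K x a).
Proof.
move=> cpK; apply: compact_closedI => //.
by apply: preimage_closed => [k _|]; [exact: continuous_aff | exact: closed_eq].
Qed.

Lemma contact_convex K x a : convex_set_rV K -> convex_set_rV (contact K x a).
Proof.
move=> cK u w t [Ku /= lu] [Kw /= lw] t0 t1; split; first exact: cK.
have -> : t *: u + (1 - t) *: w = w + t *: (u - w) by apply/rowP => i; rewrite !mxE; ring.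
by rewrite /= aff_segment lu lw subrr mulr0 addr0.
Qed.

Lemma compact_dot_le K x v : compact K ->
  exists2 B : R, 0 <= B & forall k, K k -> `|dot v (k - x)| <= B.
Proof.
move=> cpK; have [D D0 HD] := compact_sub_norm_le x cpK.
exists (n%:R * (`|v| * D)) => [|k Kk]; first by rewrite !mulr_ge0.
by apply: le_trans (normr_dot_le _ _) _; rewrite ler_wpM2l // ler_wpM2l // HD.
Qed.

Lemma aff_nonneg_norm_le K x a (r : R) : 0 < r -> (forall y, `|y - x| < r -> K y) ->
  nonneg_on K (aff x a) -> `|a| <= 2 / r.
Proof.
move=> r0 Hr la; apply: norm_le_coord => [|j]; first by rewrite divr_ge0 ?ltW.
have step (s : R) : `|s| <= r / 2 -> 0 <= 1 + s * a ord0 j.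
  move=> hs; have /la : K (x + s *: delta_mx 0 j).
    apply: Hr; rewrite (addrC x) addrK normrZ.
    apply: (@le_lt_trans _ _ (r / 2)); last by rewrite ltr_pdivrMr // ltr_pMr // ltr1n.
    by apply: le_trans hs; rewrite -[leRHS]mulr1 ler_wpM2l // norm_delta_le1.
  by rewrite /aff (addrC x) addrK dotZr dot_delta mulrC.
have r2 : 0 <= r / 2 by rewrite divr_ge0 ?ltW.
have := step (- (r / 2)); have := step (r / 2).
rewrite normrN ger0_norm // lexx => /(_ isT) Hp /(_ isT) Hm.
have E : r / 2 * (2 / r) = 1 by field; rewrite gt_eqF.
rewrite ler_norml; apply/andP; split; rewrite -(@ler_pM2l _ (r / 2)) ?divr_gt0 //.
  by rewrite mulrN E; lra.
by rewrite E; lra.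
Qed.

Lemma compact_pos_lb (N : set 'rV[R]_n) (f : 'rV[R]_n -> R) : compact N -> continuous f ->
  (forall k, N k -> 0 < f k) -> exists2 m : R, 0 < m & forall k, N k -> m <= f k.
Proof.
move=> cN cf fpos; have [N0|N0] := pselect (N !=set0); last first.
  by exists 1 => // k Nk; exfalso; apply: N0; exists k.
have [k0 + k0min] := EVT_min_rV N0 cN (continuous_subspaceT cf); rewrite inE => Nk0.
by exists (f k0) => [|k Nk]; [exact: fpos | apply: k0min; rewrite inE].
Qed.

Lemma aff_perturb K x a1 a2 v (be : R) : compact K ->
  nonneg_on K (aff x a1) -> nonneg_on K (aff x a2) -> 0 < be ->
  (forall k, K k -> aff x a1 k = 0 \/ aff x a2 k = 0 -> be < dot v (k - x)) ->
  exists2 eta : R, 0 < eta /\ eta * be < 1 &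
    forall k, K k -> 0 <= aff x a1 k + eta * (dot v (k - x) - be) /\
                     0 <= aff x a2 k + eta * (dot v (k - x) - be).
Proof.
move=> cpK l1 l2 be0 Hsep.
have cv : continuous (fun k => dot v (k - x)).
  by apply: continuous_dot (@continuous_subr _ _ x) => ?; exact: cst_continuous.
pose N := K `&` (fun k => dot v (k - x)) @^-1` [set t | t <= be].
have cN : compact N.
  by apply: compact_closedI => //; apply: preimage_closed => [k _|]; [exact: cv | exact: closed_le].
have pos a : nonneg_on K (aff x a) -> (forall k, K k -> aff x a k = 0 -> be < dot v (k - x)) ->
    forall k, N k -> 0 < aff x a k.
  move=> la ca k [Kk /= kbe]; rewrite lt_def la // andbT; apply/eqP => ak0.
  by have := ca k Kk ak0; rewrite ltNge kbe.
have [c1 c2] : continuous (aff x a1) /\ continuous (aff x a2) by split; exact: continuous_aff.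
have [m1 m10 Hm1] := compact_pos_lb cN c1
  (pos _ l1 (fun k Kk e => Hsep k Kk (or_introl e))).
have [m2 m20 Hm2] := compact_pos_lb cN c2
  (pos _ l2 (fun k Kk e => Hsep k Kk (or_intror e))).
have [B B0 HB] := compact_dot_le x v cpK.
pose m := Num.min (Num.min m1 m2) 1.
have m0 : 0 < m by rewrite !lt_min m10 m20 ltr01.
have [mm1 mm2 m_le1] : [/\ m <= m1, m <= m2 & m <= 1].
  by rewrite !ge_min !lexx !orbT.
have D0 : 0 < B + be + 1 by lra.
pose eta := m / (B + be + 1).
have eta0 : 0 < eta by rewrite divr_gt0.
have etaD : eta * (B + be) < m.
  by rewrite /eta mulrAC ltr_pdivrMr // ltr_pM2l //; lra.
exists eta; first by split => //; nra.
move=> k Kk; have [kN|kN] := leP (dot v (k - x)) be.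
  have Nk : N k by split.
  have := Hm1 k Nk; have := Hm2 k Nk; have := HB k Kk; rewrite ler_norml => /andP [Hb _].
  have : - (eta * (B + be)) <= eta * (dot v (k - x) - be) by rewrite -mulrN ler_pM2l //; lra.
  lra.
have : 0 <= eta * (dot v (k - x) - be) by rewrite mulr_ge0 ?subr_ge0 ?ltW.
by have := l1 k Kk; have := l2 k Kk; split; lra.
Qed.

(* Both functionals are perturbed by eta * (dot v (k - x) - be) and rescaled by
   1 / (1 - eta * be) to be 1 at x again; a1 - a2 is only multiplied by this factor. *)
Lemma feasible_improve K x h a1 a2 v (be eta : R) :
  nonneg_on K (aff x a1) -> nonneg_on K (aff x a2) ->
  (forall w, dot h w <= 0 -> dot (a1 - a2) w <= 0) -> 0 < dot (a1 - a2) h ->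
  0 < be -> 0 < eta -> eta * be < 1 ->
  (forall k, K k -> 0 <= aff x a1 k + eta * (dot v (k - x) - be) /\
                    0 <= aff x a2 k + eta * (dot v (k - x) - be)) ->
  exists b1 b2, [/\ nonneg_on K (aff x b1), nonneg_on K (aff x b2),
    (forall w, dot h w <= 0 -> dot (b1 - b2) w <= 0) & dot (a1 - a2) h < dot (b1 - b2) h].
Proof.
move=> _ _ l3 J0 be0 eta0 etabe pert.
have d0 : 0 < 1 - eta * be by rewrite subr_gt0.
pose c := (1 - eta * be)^-1.
have c1 : 1 < c by rewrite invf_gt1 // ltrBlDr ltrDl mulr_gt0.
have c0 : 0 < c := lt_trans ltr01 c1.
have diff : c *: (a1 + eta *: v) - c *: (a2 + eta *: v) = c *: (a1 - a2).
  by rewrite -scalerBr opprD addrACA subrr addr0.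
have affc a k : aff x (c *: (a + eta *: v)) k = c * (aff x a k + eta * (dot v (k - x) - be)).
  by rewrite /aff dotZl dotDl dotZl /c; field; rewrite gt_eqF.
exists (c *: (a1 + eta *: v)), (c *: (a2 + eta *: v)); split.
- by move=> k Kk; rewrite affc; apply: mulr_ge0 (ltW c0) _; case: (pert k Kk).
- by move=> k Kk; rewrite affc; apply: mulr_ge0 (ltW c0) _; case: (pert k Kk).
- by move=> w hw; rewrite diff dotZl pmulr_rle0 //; exact: l3.
by rewrite diff dotZl; nra.
Qed.

Lemma separate_point C x : compact C -> convex_set_rV C -> ~ C x ->
  exists v (be : R), 0 < be /\ forall z, C z -> be < dot v (z - x).
Proof.
move=> cC cvC nCx; have [C0|C0] := pselect (C !=set0); last first.
  by exists 0, 1; split => // z Cz; exfalso; apply: C0; exists z.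
have [v v0 Hv] := compact_convex_separation cC cvC C0 nCx.
have vv := dot_gt0 v0.
by exists v, (dot v v / 2); split => [|z /Hv]; [rewrite divr_gt0 | lra].
Qed.

Lemma convex_scaled_comb Z u w (al be : R) : convex_set_rV Z -> Z u -> Z w ->
  0 <= al -> 0 <= be -> exists2 y, Z y & al *: u + be *: w = (al + be) *: y.
Proof.
move=> cZ Zu Zw al0 be0; have [s0|s0] := eqVneq (al + be) 0.
  have [-> ->] : al = 0 /\ be = 0 by split; lra.
  by exists u; rewrite // addr0 !scale0r addr0.
have s_gt0 : 0 < al + be by rewrite lt_def s0 addr_ge0.
exists ((al / (al + be)) *: u + (1 - al / (al + be)) *: w).
  by apply: cZ => //; [exact: divr_ge0 al0 (ltW s_gt0) | rewrite ler_pdivrMr // mul1r lerDl].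
by apply/rowP => i; rewrite !mxE; field.
Qed.

Lemma segment_join_convex Z1 Z2 :
  convex_set_rV Z1 -> convex_set_rV Z2 -> convex_set_rV (segment_join Z1 Z2).
Proof.
move=> c1 c2 _ _ t [[[q1 p1] s1] [[Zq1 Zp1] /=]] + <- [[[q2 p2] s2] [[Zq2 Zp2] /=]] + <- t0 t1.
rewrite !in_itv /= => /andP [s10 s11] /andP [s20 s21].
have [u1 u2 ut] : [/\ 0 <= 1 - s1, 0 <= 1 - s2 & 0 <= 1 - t] by rewrite !subr_ge0.
have [q Zq Eq] := convex_scaled_comb c1 Zq1 Zq2 (mulr_ge0 t0 u1) (mulr_ge0 ut u2).
have [p Zp Ep] := convex_scaled_comb c2 Zp1 Zp2 (mulr_ge0 t0 s10) (mulr_ge0 ut s20).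
exists (q, p, t * s1 + (1 - t) * s2).
  by split; [split | rewrite /= in_itv /=; apply/andP; split; nra].
have -> : 1 - (t * s1 + (1 - t) * s2) = t * (1 - s1) + (1 - t) * (1 - s2) by ring.
by rewrite /= -Eq -Ep; apply/rowP => i; rewrite !mxE; ring.
Qed.

Lemma segment_join_compact Z1 Z2 :
  compact Z1 -> compact Z2 -> compact (segment_join Z1 Z2).
Proof.
move=> cZ1 cZ2; apply: continuous_compact; last first.
  by apply: compact_setX; [exact: compact_setX | exact: segment_compact].
apply: continuous_subspaceT => z.
have c2 : {for z, continuous (fun z : 'rV[R]_n * 'rV[R]_n * R => z.2)} by exact: cvg_snd.
have c11 : {for z, continuous (fun z : 'rV[R]_n * 'rV[R]_n * R => z.1.1)}.
  by apply: (@continuous_comp _ _ _ fst fst); exact: cvg_fst.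
have c12 : {for z, continuous (fun z : 'rV[R]_n * 'rV[R]_n * R => z.1.2)}.
  by apply: (@continuous_comp _ _ _ fst snd); [exact: cvg_fst | exact: cvg_snd].
apply: (@continuousD _ _ _ (fun z : 'rV[R]_n * 'rV[R]_n * R => (1 - z.2) *: z.1.1)
  (fun z => z.2 *: z.1.2)); last exact: continuousZ.
apply: (@continuousZ _ _ _ (fun z : 'rV[R]_n * 'rV[R]_n * R => 1 - z.2)) => //.
by apply: cvgB => //; exact: cvg_cst.
Qed.

Lemma contact_separation K x a1 a2 : compact K -> convex_set_rV K ->
  ~ (exists q p (s : R), [/\ contact K x a1 q, contact K x a2 p, 0 < s < 1 &
       x = (1 - s) *: q + s *: p]) ->
  exists v (be : R), 0 < be /\
    forall k, K k -> aff x a1 k = 0 \/ aff x a2 k = 0 -> be < dot v (k - x).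
Proof.
move=> cpK cK nochord.
have cZ a : compact (contact K x a) by exact: contact_compact.
have cvZ a : convex_set_rV (contact K x a) by exact: contact_convex.
have nZx a : ~ contact K x a x by exact: contact_base.
have [Z10|Z10] := pselect (contact K x a1 !=set0); last first.
  have [v [be [be0 Hv]]] := separate_point (cZ a2) (cvZ a2) (nZx a2).
  exists v, be; split => // k Kk [k1|k2]; last exact: Hv.
  by exfalso; apply: Z10; exists k.
have [Z20|Z20] := pselect (contact K x a2 !=set0); last first.
  have [v [be [be0 Hv]]] := separate_point (cZ a1) (cvZ a1) (nZx a1).
  exists v, be; split => // k Kk [k1|k2]; first exact: Hv.
  by exfalso; apply: Z20; exists k.
have [q0 Zq0] := Z10; have [p0 Zp0] := Z20.
have nJx : ~ segment_join (contact K x a1) (contact K x a2) x.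
  move=> [[[q p] s] [[Zq Zp] /=]]; rewrite in_itv /= => /andP [s0 s1] xE.
  have [s00|s0'] := eqVneq s 0.
    move: Zq; have -> : q = x by rewrite -xE s00 subr0 scale1r scale0r addr0.
    exact: contact_base.
  have [s11|s1'] := eqVneq s 1.
    move: Zp; have -> : p = x by rewrite -xE s11 subrr scale0r add0r scale1r.
    exact: contact_base.
  by apply: nochord; exists q, p, s; split; rewrite ?lt_neqAle ?s0 ?s1 ?(eq_sym 0) ?s0' ?s1'.
have [v [be [be0 Hv]]] := separate_point (segment_join_compact (cZ a1) (cZ a2))
  (segment_join_convex (cvZ a1) (cvZ a2)) nJx.
exists v, be; split => // k Kk [k1|k2]; apply: Hv.
  exists (k, p0, 0); last by rewrite /= subr0 scale1r scale0r addr0.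
  by split; [split | rewrite /= in_itv /= lexx ler01].
exists (q0, k, 1); last by rewrite /= subrr scale0r add0r scale1r.
by split; [split | rewrite /= in_itv /= lexx ler01].
Qed.

End Contact.

Section SupportingChord.
Context {R : realType} {n : nat}.
Variables (K : set 'rV[R]_n) (x h : 'rV[R]_n).
Hypotheses (cpK : compact K) (cvK : convex_set_rV K) (ixK : interior K x) (h0 : h != 0).

(* A pair of gradients (a1, a2) is encoded as row_mx a1 a2, so that EVT_max_rV applies. *)
Let feasible : set 'rV[R]_(n + n) :=
  [set v | forall k, K k -> 0 <= aff x (lsubmx v) k] `&`
  [set v | forall k, K k -> 0 <= aff x (rsubmx v) k] `&`
  [set v | forall w, dot h w <= 0 -> dot (lsubmx v - rsubmx v) w <= 0].

Let objective (v : 'rV[R]_(n + n)) : R := dot (lsubmx v - rsubmx v) h.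

Let continuous_dotl (u : 'rV[R]_(n + n)) : continuous (fun v => dot v u).
Proof. by apply: continuous_dot => v; [exact: cvg_id | exact: cst_continuous]. Qed.

Lemma feasible_compact : compact feasible.
Proof.
have [r r0 Hr] := (interiorP K x).1 ixK.
apply: bounded_closed_compact.
  apply: (@norm_le_bounded _ _ _ (2 / r)) => v [[l1 l2] _].
  apply: norm_lsub_rsub_le; first by rewrite divr_ge0 ?ltW.
    exact: aff_nonneg_norm_le r0 Hr l1.
  exact: aff_nonneg_norm_le r0 Hr l2.
apply: closedI; first apply: closedI.
- apply: (@closed_forall_preimage _ _ _ K (fun k v => aff x (lsubmx v) k)
    (fun=> [set t | 0 <= t])) => [k|_]; last exact: closed_ge.
  suff -> : (fun v : 'rV[R]_(n + n) => aff x (lsubmx v) k) = aff 0 (row_mx (k - x) 0) by exact: continuous_aff.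
  by apply: funext => v; rewrite /aff subr0 [in RHS]dotC dot_row_mx dot0r addr0.
- apply: (@closed_forall_preimage _ _ _ K (fun k v => aff x (rsubmx v) k)
    (fun=> [set t | 0 <= t])) => [k|_]; last exact: closed_ge.
  suff -> : (fun v : 'rV[R]_(n + n) => aff x (rsubmx v) k) = aff 0 (row_mx 0 (k - x)) by exact: continuous_aff.
  by apply: funext => v; rewrite /aff subr0 [in RHS]dotC dot_row_mx dot0r add0r.
apply: (@closed_forall_preimage _ _ _ (fun w => dot h w <= 0)
  (fun w v => dot (lsubmx v - rsubmx v) w) (fun=> [set t | t <= 0])) => [w|_]; last exact: closed_le.
suff -> : (fun v : 'rV[R]_(n + n) => dot (lsubmx v - rsubmx v) w) =
    (fun v => dot v (row_mx w (- w))) by exact: continuous_dotl.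
by apply: funext => v; rewrite dot_row_mx dotNr dotBl.
Qed.

Lemma feasible_objective_gt0 : exists2 v, feasible v & 0 < objective v.
Proof.
have [B B0 HB] := compact_dot_le x h cpK.
pose eps := (B + 1)^-1.
have eps0 : 0 < eps by rewrite invr_gt0 ltr_wpDl.
have epsB : eps * B < 1 by rewrite mulrC ltr_pdivrMr ?ltr_wpDl // mul1r ltrDl.
exists (row_mx (eps *: h) 0); last first.
  by rewrite /objective row_mxKl row_mxKr subr0 dotZl mulr_gt0 // dot_gt0.
split; [split|] => /=; rewrite ?row_mxKl ?row_mxKr.
- move=> k Kk; rewrite /aff dotZl.
  by have := HB k Kk; rewrite ler_norml => /andP [Hb _]; nra.
- by move=> k _; rewrite /aff dot0l addr0.
- by move=> w hw; rewrite subr0 dotZl pmulr_rle0.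
Qed.

Lemma supporting_chord : exists a1 a2 q p (s : R),
  [/\ nonneg_on K (aff x a1), nonneg_on K (aff x a2),
      (forall w, dot h w <= 0 -> dot (a1 - a2) w <= 0),
      contact K x a1 q /\ contact K x a2 p & 0 < s < 1 /\ x = (1 - s) *: q + s *: p].
Proof.
have [v0 Fv0 J0] := feasible_objective_gt0.
have cJ : continuous objective.
  suff -> : objective = (fun v => dot v (row_mx h (- h))) by exact: continuous_dotl.
  by apply: funext => v; rewrite /objective dot_row_mx dotNr dotBl.
have [vs] := EVT_max_rV (ex_intro _ v0 Fv0) feasible_compact (continuous_subspaceT cJ).
rewrite inE => -[[l1 l2] l3] vsmax.
have Jpos : 0 < objective vs by apply: lt_le_trans J0 (vsmax _ _); rewrite inE.
(* At a maximiser the contact sets cannot be separated from x, since otherwise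
   feasible_improve would beat it; hence some chord between them passes through x. *)
have [[q [p [s [Zq Zp s01 xE]]]]|nochord] := pselect (exists q p (s : R),
  [/\ contact K x (lsubmx vs) q, contact K x (rsubmx vs) p, 0 < s < 1 &
       x = (1 - s) *: q + s *: p]).
  by exists (lsubmx vs), (rsubmx vs), q, p, s; split.
have [v [be [be0 Hsep]]] := contact_separation cpK cvK nochord.
have [eta [eta0 etabe] pert] := aff_perturb cpK l1 l2 be0 Hsep.
have [b1 [b2 [m1 m2 m3 better]]] := feasible_improve l1 l2 l3 Jpos be0 eta0 etabe pert.
have := vsmax (row_mx b1 b2); rewrite inE /= !row_mxKl !row_mxKr => /(_ (conj (conj m1 m2) m3)).
by rewrite /objective !row_mxKl !row_mxKr; lra.
Qed.

End SupportingChord.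

(* exp (2 d_K(x, y)) for y = x + t (p - x) on a chord [q, p] of K through x = (1 - s) q + s p. *)
Definition chord_ratio (R : realType) (s t : R) : R := (1 + t * ((1 - s) / s)) / (1 - t).

Section ChordRatio.
Context {R : realType}.
Implicit Types s t : R.

Lemma chord_ratio_ltr s t t' : 0 < s < 1 -> 0 <= t -> t < t' -> t' < 1 ->
  chord_ratio s t < chord_ratio s t'.
Proof.
move=> /andP [s0 s1] t0 tt' t'1.
have k0 : 0 < (1 - s) / s by rewrite divr_gt0 // subr_gt0.
have t1 : t < 1 := lt_trans tt' t'1.
rewrite /chord_ratio ltr_pdivrMr ?subr_gt0 // mulrAC.
by rewrite ltr_pdivlMr ?subr_gt0 //; nra.
Qed.

Lemma chord_ratio_gt0 s t : 0 < s < 1 -> 0 <= t < 1 -> 0 < chord_ratio s t.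
Proof.
move=> /andP [s0 s1] /andP [t0 t1].
have k0 : 0 < (1 - s) / s by rewrite divr_gt0 // subr_gt0.
apply: divr_gt0; last by rewrite subr_gt0.
exact: ltr_wpDr (mulr_ge0 t0 (ltW k0)) ltr01.
Qed.

Lemma chord_ratio_surj s E : 0 < s < 1 -> 1 < E -> exists2 t, 0 < t < 1 & chord_ratio s t = E.
Proof.
move=> /andP [s0 s1] E1; rewrite /chord_ratio; set k := (1 - s) / s.
have k0 : 0 < k by rewrite divr_gt0 // subr_gt0.
have Ek : 0 < E + k by lra.
exists ((E - 1) / (E + k)).
  by rewrite divr_gt0 ?subr_gt0 //= ltr_pdivrMr // mul1r; lra.
rewrite (_ : 1 - (E - 1) / (E + k) = (k + 1) / (E + k)); last by field; rewrite gt_eqF.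
by field; rewrite !gt_eqF //; lra.
Qed.

End ChordRatio.

Lemma inf_le_of (R : realType) (S : set R) (y a : R) : 0 <= a -> S y -> y <= a -> inf S <= a.
Proof.
move=> a0 Sy ya; have [hl|hl] := pselect (has_lbound S); first exact: le_trans (ge_inf hl Sy) ya.
by rewrite inf_out // => -[_ /hl].
Qed.

Section ChordGeometry.
Context {R : realType} {n : nat}.
Variables (K : set 'rV[R]_n) (x a1 a2 q p : 'rV[R]_n) (s : R).
Hypotheses (cpK : compact K) (cvK : convex_set_rV K) (ixK : interior K x)
  (l1 : nonneg_on K (aff x a1)) (l2 : nonneg_on K (aff x a2))
  (Zq : contact K x a1 q) (Zp : contact K x a2 p) (s01 : 0 < s < 1)
  (xE : x = (1 - s) *: q + s *: p).

Let s_gt0 : 0 < s. Proof. by case/andP: s01. Qed.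
Let subs_gt0 : 0 < 1 - s. Proof. by case/andP: s01; rewrite subr_gt0. Qed.

Let px : p - x = (1 - s) *: (p - q).
Proof. by rewrite xE; apply/rowP => i; rewrite !mxE; ring. Qed.

Let qx : q - x = (- s) *: (p - q).
Proof. by rewrite xE; apply/rowP => i; rewrite !mxE; ring. Qed.

Let pq_neq0 : p - q != 0.
Proof.
apply/eqP => pq0; have qE : q = x by apply/eqP; rewrite -subr_eq0 qx pq0 scaler0.
by move: Zq; rewrite qE; exact: contact_base.
Qed.

Let dot_a1 : dot a1 (p - x) = (1 - s) / s.
Proof.
have := Zq.2; rewrite /= /aff qx px !dotZr => q0.
have -> : dot a1 (p - q) = s^-1 by apply: (@mulfI _ s); rewrite ?gt_eqF // mulfV ?gt_eqF //; lra.
by rewrite mulrC.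
Qed.

Let dot_a2 : dot a2 (p - x) = -1.
Proof. by have := Zp.2; rewrite /= /aff; lra. Qed.

Lemma aff_chord1 t : aff x a1 (x + t *: (p - x)) = 1 + t * ((1 - s) / s).
Proof. by rewrite /aff (addrC x) addrK dotZr dot_a1. Qed.

Lemma aff_chord2 t : aff x a2 (x + t *: (p - x)) = 1 - t.
Proof. by rewrite /aff (addrC x) addrK dotZr dot_a2 mulrN1. Qed.

Lemma interior_chord t : 0 <= t < 1 -> interior K (x + t *: (p - x)).
Proof. by case/andP => t0 t1; apply: interior_segment => //; case: Zp. Qed.

Lemma hilbert_dist_chord t : 0 < t < 1 ->
  hilbert_dist K x (x + t *: (p - x)) = ln (chord_ratio s t) / 2.
Proof.
move=> t01; have /andP [t0 t1] := t01; set y := x + t *: (p - x).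
have c0 : 0 < t * (1 - s) by rewrite mulr_gt0.
have yx : y - x = t *: (p - x) by rewrite /y addrAC subrr add0r.
have xy : x != y.
  by rewrite eq_sym -subr_eq0 yx px scalerA scaler_eq0 (negbTE pq_neq0) orbF gt_eqF.
have Eq : y + (s + t * (1 - s)) / (t * (1 - s)) *: (x - y) = q.
  by rewrite /y xE; apply/rowP => i; rewrite !mxE; field; rewrite (gt_eqF subs_gt0) (gt_eqF t0).
have Ep : x + t^-1 *: (y - x) = p by rewrite yx scalerA mulVf ?gt_eqF // scale1r subrKC.
have T1 : 1 < (s + t * (1 - s)) / (t * (1 - s)) by rewrite ltr_pdivlMr // mul1r ltrDr.
have T2 : 1 < t^-1 by rewrite invf_gt1.
have iy : interior K y by apply: interior_chord; rewrite (ltW t0) t1.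
have := hilbert_dist_exits cpK cvK ixK iy xy T1 T2.
rewrite Eq Ep => /(_ Zq.1 (aff_eq0_not_interior l1 Zq.2) Zp.1 (aff_eq0_not_interior l2 Zp.2)) ->.
congr (ln _ / 2); rewrite /chord_ratio; field.
by rewrite (gt_eqF s_gt0) (gt_eqF t0) (gt_eqF subs_gt0) gt_eqF ?subr_gt0.
Qed.

Lemma hilbert_dist_chord_ge g t : interior K g -> aff x a1 g <= aff x a2 g -> 0 <= t < 1 ->
  ln (chord_ratio s t) / 2 <= hilbert_dist K (x + t *: (p - x)) g.
Proof.
move=> ig g12 t01; have /andP [t0 t1] := t01.
apply: le_trans (hilbert_dist_ge_aff cpK cvK l1 l2 (interior_chord t01) ig).
have g1 := aff_gt0_interior l1 ig; have g2 := aff_gt0_interior l2 ig.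
rewrite aff_chord1 aff_chord2 /chord_ratio; set A := 1 + t * ((1 - s) / s).
have A0 : 0 < A := ltr_wpDr (mulr_ge0 t0 (divr_ge0 (ltW subs_gt0) (ltW s_gt0))) ltr01.
have T0 : 0 < 1 - t by rewrite subr_gt0.
have L0 : 0 < A / (1 - t) by rewrite divr_gt0.
have R0 : 0 < A * aff x a2 g / (aff x a1 g * (1 - t)) by rewrite divr_gt0 ?mulr_gt0.
rewrite ler_pM2r // ler_ln ?posrE // ler_pdivrMr // mulrAC ler_pdivlMr ?mulr_gt0 //.
have D : 0 <= aff x a2 g - aff x a1 g by rewrite subr_ge0.
have := mulr_ge0 (ltW (mulr_gt0 A0 T0)) D; nra.
Qed.

Lemma chord_bd_Gplus (G : set 'rV[R]_n) (alpha : R) : 0 < alpha -> G x -> G `<=` interior K ->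
  (forall g, G g -> aff x a1 g <= aff x a2 g) ->
  exists y, bd (Gplus K G alpha) y /\ hilbert_dist K x y = alpha.
Proof.
move=> a0 Gx GK G12.
have E1 : 1 < expR (2 * alpha) by rewrite expR_gt1 mulr_gt0.
have [t0 t001 rt0] := chord_ratio_surj s01 E1.
have /andP [t00 t01] := t001.
have dist_t0 : hilbert_dist K x (x + t0 *: (p - x)) = alpha.
  by rewrite hilbert_dist_chord // rt0 expRK mulrC mulKf.
set y := x + t0 *: (p - x).
have Gpy : Gplus K G alpha y.
  split; first by apply: interior_chord; rewrite ltW.
  apply: inf_le_of (ltW a0) _ (lexx _).
  by exists x; [exact: Gx | rewrite hilbert_distC].
exists y; split => //; split; first exact: subset_closure.
move=> /interiorP [r r0 Hr].
have [e /andP [e0 e1] er] := small_scale ((1 - t0) *: (p - x)) r0.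
set t := t0 + e * (1 - t0).
have [tt0 t1] : t0 < t /\ t < 1 by split; rewrite /t; nra.
have [_] : Gplus K G alpha (x + t *: (p - x)).
  apply: Hr; suff -> : x + t *: (p - x) - y = e *: ((1 - t0) *: (p - x)) by [].
  by rewrite /y /t; apply/rowP => i; rewrite !mxE; ring.
have : ln (chord_ratio s t) / 2 <= inf [set hilbert_dist K (x + t *: (p - x)) g | g in G].
  apply: lb_le_inf; first by exists (hilbert_dist K (x + t *: (p - x)) x), x.
  move=> _ [g Gg <-]; apply: hilbert_dist_chord_ge; [exact: GK | exact: G12 |].
  by rewrite t1 andbT (le_trans (ltW t00) (ltW tt0)).
have : alpha < ln (chord_ratio s t) / 2.
  rewrite -dist_t0 hilbert_dist_chord ?t00 ?t01 // ltr_pM2r // ltr_ln ?posrE.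
  - exact: chord_ratio_ltr (ltW t00) tt0 t1.
  - by apply: chord_ratio_gt0; rewrite ?ltW.
  - by apply: chord_ratio_gt0; rewrite ?t1 ?(le_trans (ltW t00) (ltW tt0)).
lra.
Qed.

End ChordGeometry.

Theorem lemma8p4 (R : realType) (d : nat) (K G : set 'rV[R]_d) (alpha : R) :
  convex_body K -> convex_body G -> G `<=` interior K ->
  0 < alpha -> alpha <= 1 ->
  (forall x, bd G x -> exists y, bd (Gplus K G alpha) y /\ hilbert_dist K x y = alpha)
  /\ bd G `<=` [set z | inf [set hilbert_dist K z w | w in bd (Gplus K G alpha)] <= alpha].
Proof.
move=> [cpK cvK _] bG GK a0 _.
have bd_Gplus_at_dist x : bd G x -> exists y, bd (Gplus K G alpha) y /\ hilbert_dist K x y = alpha.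
  move=> bdx; have [cpG _ _] := bG.
  have [Gx _] := (bd_closed _ (compact_closed_rV cpG)).1 bdx.
  have [h h0 hG] := convex_body_support bG bdx.
  have [a1 [a2 [q [p [s [l1 l2 l3 [Zq Zp] [s01 xE]]]]]]] :=
    supporting_chord cpK cvK (GK x Gx) h0.
  apply: (chord_bd_Gplus cpK cvK (GK x Gx) l1 l2 Zq Zp s01 xE a0 Gx GK) => g Gg.
  by have := l3 _ (hG g Gg); rewrite /aff dotBl; lra.
split => // z /bd_Gplus_at_dist [y [bdy hzy]] /=.
apply: inf_le_of (ltW a0) _ (lexx alpha).
by exists y; [exact: bdy | exact: hzy].
Qed.
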